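(* Let $G$ be a flat affine group scheme over $R$, $N\to G$ the automatic blowup of the identity, and $\varepsilon_K:K[G]\to K$ the counit. Then $R[N]=\{f\in K[G]:\varepsilon_K(f)\in R\}$; equivalently, the first projection $K[G]\times_{\varepsilon_K,K}R\to K[G]$ is an isomorphism onto $R[N]$. Geometrically, $N\simeq G_K\amalg_{e,\mathrm{Spec}\,K}\mathrm{Spec}\,R$ as $R$-schemes (pushout of $G_K\xleftarrow{e}\mathrm{Spec}\,K\to\mathrm{Spec}\,R$).
   Context: $R$ is a discrete valuation ring with uniformizer $\pi$, fraction field $K$, residue field $k$; $R[G]\subset K[G]$ for flat $G$. The Neron blowup of a flat affine group scheme $H$ at a closed subgroup of $H\otimes k$ with ideal $J\subset R[H]$ (inverse image of its ideal) is $\mathrm{Spec}$ of the subring of $K[H]$ generated by $R[H]$ and $\pi^{-1}J$. The automatic blowup of the identity $N\to G$ is the limit of $\cdots\to G_{n+1}\to G_n\to\cdots\to G_0=G$, where $G_{n+1}\to G_n$ is the Neron blowup of $G_n$ at $\{e\}\subset G_n\otimes k$. *)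

From HB Require Import structures.
From mathcomp Require Import all_boot all_order all_algebra.
Set Implicit Arguments. Unset Strict Implicit. Unset Printing Implicit Defensive.
Import GRing.Theory.
Local Open Scope ring_scope.

Definition is_dvr_with_uniformizer (R : idomainType) (pi : R) : Prop :=
  pi != 0 /\ pi \notin GRing.unit /\
  (forall r : R, r != 0 ->
     exists (u : R) (n : nat), u \is a GRing.unit /\ r = u * pi ^+ n).

Definition is_fraction_field (R : idomainType) (K : fieldType)
    (iota : {rmorphism R -> K}) : Prop :=
  injective iota /\
  (forall x : K, exists a b : R, b != 0 /\ x = iota a / iota b).

Definition is_R_subalgebra (R : idomainType) (K : fieldType)
    (iota : {rmorphism R -> K}) (A : comAlgType K) (B : A -> Prop) : Prop :=
  B 0 /\ B 1 /\
  (forall x y, B x -> B y -> B (x + y)) /\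
  (forall x, B x -> B (- x)) /\
  (forall x y, B x -> B y -> B (x * y)) /\
  (forall (r : R) x, B x -> B (iota r *: x)).

Definition is_copair (A AA C : Type) (j1 j2 : A -> AA) (f g : A -> C)
    (h : AA -> C) : Prop :=
  (forall a, h (j1 a) = f a) /\ (forall a, h (j2 a) = g a).

(* (AA, j1, j2) is the coproduct of A with itself in commutative K-algebras,
   i.e. AA = A (x)_K A with the two canonical inclusions. *)
Definition is_coproduct (K : fieldType) (A AA : comAlgType K)
    (j1 j2 : {lrmorphism A -> AA}) : Prop :=
  forall (C : comAlgType K) (f g : {lrmorphism A -> C}),
    exists h : {lrmorphism AA -> C},
      is_copair j1 j2 f g h /\
      (forall h' : {lrmorphism AA -> C}, is_copair j1 j2 f g h' -> h' =1 h).

(* Hopf algebra axioms for (A, Delta, eps, S), expressed (Yoneda) as: for every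
   commutative K-algebra C, the points Hom_K(A, C) form a group under the
   convolution f * g := [f, g] o Delta, with unit a |-> eps a and inverse f o S. *)
Definition is_hopf (K : fieldType) (A AA : comAlgType K)
    (j1 j2 : {lrmorphism A -> AA}) (Delta : {lrmorphism A -> AA})
    (eps : {lrmorphism A -> K^o}) (S : {lrmorphism A -> A}) : Prop :=
  forall (C : comAlgType K),
    let e := fun a : A => ((eps a : K) *: (1 : C)) in
    (forall (f1 f2 f3 : {lrmorphism A -> C}) (h12 h23 hL hR : {lrmorphism AA -> C}),
        is_copair j1 j2 f1 f2 h12 -> is_copair j1 j2 f2 f3 h23 ->
        is_copair j1 j2 (h12 \o Delta) f3 hL ->
        is_copair j1 j2 f1 (h23 \o Delta) hR ->
        forall a, hL (Delta a) = hR (Delta a)) /\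
    (forall (f : {lrmorphism A -> C}) (h1 h2 : {lrmorphism AA -> C}),
        is_copair j1 j2 f e h1 -> is_copair j1 j2 e f h2 ->
        forall a, h1 (Delta a) = f a /\ h2 (Delta a) = f a) /\
    (forall (f : {lrmorphism A -> C}) (h1 h2 : {lrmorphism AA -> C}),
        is_copair j1 j2 f (f \o S) h1 -> is_copair j1 j2 (f \o S) f h2 ->
        forall a, h1 (Delta a) = e a /\ h2 (Delta a) = e a).

(* A flat affine group scheme G over R, given through R[G] = B inside
   K[G] = A = R[G] (x)_R K, with the Hopf structure of K[G] (coproduct AA,
   comultiplication Delta, counit eps, antipode S) restricting to R[G]. *)
Definition flat_affine_group_scheme (R : idomainType) (K : fieldType)
    (iota : {rmorphism R -> K}) (A : comAlgType K) (B : A -> Prop)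
    (AA : comAlgType K) (j1 j2 : {lrmorphism A -> AA})
    (Delta : {lrmorphism A -> AA}) (eps : {lrmorphism A -> K^o})
    (S : {lrmorphism A -> A}) : Prop :=
  is_R_subalgebra iota B /\
  (* K[G] = R[G] (x)_R K, i.e. the localization of R[G] at R \ 0 *)
  (forall a : A, exists (s : R) (b : A), s != 0 /\ B b /\ a = (iota s)^-1 *: b) /\
  is_coproduct j1 j2 /\
  is_hopf j1 j2 Delta eps S /\
  (* the Hopf structure is defined over R *)
  (forall b, B b -> exists r : R, (eps b : K) = iota r) /\
  (forall b, B b -> B (S b)) /\
  (forall b, B b -> exists s : seq (A * A),
      (forall p, p \in s -> B p.1 /\ B p.2) /\
      Delta b = \sum_(p <- s) j1 p.1 * j2 p.2).

Inductive subring_gen (T : ringType) (P : T -> Prop) : T -> Prop :=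
| sg_in x : P x -> subring_gen P x
| sg_one : subring_gen P 1
| sg_add x y : subring_gen P x -> subring_gen P y -> subring_gen P (x + y)
| sg_opp x : subring_gen P x -> subring_gen P (- x)
| sg_mul x y : subring_gen P x -> subring_gen P y -> subring_gen P (x * y).

(* Neron blowup of H (coordinate ring P = R[H] inside K[G], with counit the
   restriction of eps) at the identity {e} of H (x) k.  The ideal J is the
   inverse image in R[H] of the ideal of {e} in k[H], i.e.
   J = { f in R[H] | eps f in pi R }. *)
Definition neron_blowup_identity (R : idomainType) (K : fieldType)
    (iota : {rmorphism R -> K}) (pi : R) (A : comAlgType K) (eps : A -> K)
    (P : A -> Prop) : A -> Prop :=
  subring_gen (fun x : A => P x \/
     exists f : A, P f /\ (exists r : R, eps f = iota (pi * r)) /\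
                   x = (iota pi)^-1 *: f).

Fixpoint blowup_tower (R : idomainType) (K : fieldType)
    (iota : {rmorphism R -> K}) (pi : R) (A : comAlgType K) (eps : A -> K)
    (B : A -> Prop) (n : nat) : A -> Prop :=
  match n with
  | 0 => B
  | n'.+1 => neron_blowup_identity iota pi eps (blowup_tower iota pi eps B n')
  end.

(* R[N] for the automatic blowup N = lim G_n: the colimit of the R[G_n],
   which (all transition maps being inclusions in K[G]) is their union. *)
Definition automatic_blowup_ring (R : idomainType) (K : fieldType)
    (iota : {rmorphism R -> K}) (pi : R) (A : comAlgType K) (eps : A -> K)
    (B : A -> Prop) : A -> Prop :=
  fun f => exists n, blowup_tower iota pi eps B n f.

From HB Require Import structures.
From mathcomp Require Import all_boot all_order all_algebra.
Import GRing.Theory.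
Set Implicit Arguments.
Unset Strict Implicit.
Local Open Scope ring_scope.

(* Every blowup in the tower only adjoins elements of the form pi^-1 f with
   eps f in pi R, so the counit stays integral on R[N].  Conversely, if eps f
   lies in R, write f = pi^-n b with b in R[G] (the DVR has only the
   denominators u pi^n, u a unit); then eps b lies in pi^n R and dividing b
   by pi one step at a time climbs n steps up the tower. *)

Lemma rmorph_subring_gen_range (T U V : nzRingType) (phi : {rmorphism T -> V})
    (iota : {rmorphism U -> V}) (P : T -> Prop) (x : T) :
  (forall y, P y -> exists u, phi y = iota u) ->
  subring_gen P x -> exists u, phi x = iota u.
Proof.
move=> Prange; elim=> {x} [y /Prange //| | x y _ [a ea] _ [b eb]
  | x _ [a ea] | x y _ [a ea] _ [b eb]].
- by exists 1; rewrite !rmorph1.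
- by exists (a + b); rewrite !rmorphD ea eb.
- by exists (- a); rewrite !rmorphN ea.
- by exists (a * b); rewrite !rmorphM ea eb.
Qed.

Section AutomaticBlowup.

Variables (R : idomainType) (K : fieldType) (iota : {rmorphism R -> K}).
Variables (pi : R) (A : comAlgType K) (eps : {lrmorphism A -> K^o}).
Hypothesis iota_pi_neq0 : iota pi != 0.

Let epsK (a : A) : K := eps a.
Let tower := blowup_tower iota pi epsK.

Let epsZ (c : K) (a : A) : epsK (c *: a) = c * epsK a.
Proof. by rewrite /epsK linearZ. Qed.

Definition counit_integral (f : A) : Prop := exists r : R, epsK f = iota r.

Lemma neron_blowup_counit_integral (P : A -> Prop) (f : A) :
  (forall g, P g -> counit_integral g) ->
  neron_blowup_identity iota pi epsK P f -> counit_integral f.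
Proof.
move=> Pint; apply: rmorph_subring_gen_range => g [/Pint //|[h [_ [[r er] ->]]]].
exists r; change (epsK ((iota pi)^-1 *: h) = iota r).
by rewrite (epsZ _ h) er rmorphM mulrA mulVf ?mul1r.
Qed.

Lemma blowup_tower_counit_integral (B : A -> Prop) (n : nat) (f : A) :
  (forall g, B g -> counit_integral g) ->
  tower B n f -> counit_integral f.
Proof.
move=> Bint; elim: n f => [|n IHn] f; first exact: Bint.
exact: neron_blowup_counit_integral.
Qed.

Lemma blowup_tower_scale_pi_inv (B : A -> Prop) (k m : nat) (r : R) (g : A) :
  tower B m g -> epsK g = iota (pi ^+ k * r) ->
  tower B (m + k) ((iota pi)^-1 ^+ k *: g).
Proof.
elim: k m g => [|k IHk] m g Gg eg; first by rewrite addn0 expr0 scale1r.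
have Gg1 : tower B m.+1 ((iota pi)^-1 *: g).
  apply: sg_in; right; exists g; split=> //; split=> //.
  by exists (pi ^+ k * r); rewrite eg exprS mulrA.
rewrite -addSnnS exprSr -scalerA; apply: IHk Gg1 _.
by rewrite (epsZ _ g) eg exprS -mulrA rmorphM mulrA mulVf ?mul1r.
Qed.

Lemma counit_integral_pi_denominator (B : A -> Prop) (f : A) :
  is_dvr_with_uniformizer pi -> injective iota ->
  (forall (r : R) b, B b -> B (iota r *: b)) ->
  (forall a : A, exists (s : R) (b : A), s != 0 /\ B b /\ a = (iota s)^-1 *: b) ->
  counit_integral f ->
  exists (n : nat) (r : R) (b : A),
    [/\ B b, epsK b = iota (pi ^+ n * r) & f = (iota pi)^-1 ^+ n *: b].
Proof.
move=> [_ [_ dvr]] iota_inj BZ loc.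
have [s [b [s_neq0 [Bb ->]]]] := loc f; case=> r er.
have [u [n [u_unit def_s]]] := dvr s s_neq0.
have iota_s_neq0 : iota s != 0 by rewrite raddf_eq0.
have eb : epsK b = iota s * iota r.
  rewrite (epsZ _ b) in er.
  by rewrite -er mulrA mulfV ?mul1r.
exists n, r, (iota u^-1 *: b); split; first exact: BZ.
  rewrite (epsZ _ b) eb def_s -!rmorphM.
  by rewrite !mulrA mulVr ?mul1r.
by rewrite scalerA def_s rmorphM invfM rmorphV // rmorphXn exprVn mulrC.
Qed.

End AutomaticBlowup.

Theorem corollary2p21 (R : idomainType) (K : fieldType)
    (iota : {rmorphism R -> K}) (pi : R)
    (A : comAlgType K) (B : A -> Prop)
    (AA : comAlgType K) (j1 j2 : {lrmorphism A -> AA})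
    (Delta : {lrmorphism A -> AA}) (eps : {lrmorphism A -> K^o})
    (S : {lrmorphism A -> A}) :
  is_dvr_with_uniformizer pi ->
  is_fraction_field iota ->
  flat_affine_group_scheme iota B j1 j2 Delta eps S ->
  forall f : A,
    automatic_blowup_ring iota pi (fun a => (eps a : K)) B f <->
    exists r : R, (eps f : K) = iota r.
Proof.
move=> dvr [iota_inj _] [[_ [_ [_ [_ [_ BZ]]]]] [loc [_ [_ [epsB _]]]]] f.
have iota_pi_neq0 : iota pi != 0 by rewrite raddf_eq0 //; case: dvr.
split=> [[n]|f_int]; first exact: blowup_tower_counit_integral.
have [n [r [b [Bb eb ->]]]] :=
  counit_integral_pi_denominator (eps := eps) dvr iota_inj BZ loc f_int.
exists (0 + n)%N; exact: (blowup_tower_scale_pi_inv iota_pi_neq0 (m := 0) Bb eb).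
Qed.
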